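(* For every finite multiset $\Gamma$ and formulas $\varphi,\chi$: if both $\Gamma\Rightarrow\varphi$ and $\varphi,\Gamma\Rightarrow\chi$ are provable in $\mathsf{G4iSLt}$, then $\Gamma\Rightarrow\chi$ is provable in $\mathsf{G4iSLt}$.
   Context: Formulas are built by the grammar $\varphi ::= p \mid \bot \mid \varphi\land\varphi \mid \varphi\lor\varphi \mid \varphi\to\varphi \mid \Box\varphi$, with $p$ ranging over a countably infinite set of propositional variables. For a multiset $\Gamma$, $\Box\Gamma=\{\Box\psi:\psi\in\Gamma\}$; a boxed formula is one of the form $\Box\psi$. A sequent is $\Gamma\Rightarrow\chi$ with $\Gamma$ a finite multiset of formulas and $\chi$ a formula. The sequent calculus $\mathsf{G4iSLt}$ has the following rules, where $p$ is a propositional variable and $\Phi$ always denotes a multiset containing no boxed formula: (⊥L) $\bot,\Gamma\Rightarrow\chi$ (no premise); (IdP) $\Gamma,p\Rightarrow p$ (no premise); (∧L) from $\Gamma,\varphi,\psi\Rightarrow\chi$ infer $\Gamma,\varphi\land\psi\Rightarrow\chi$; (∧R) from $\Gamma\Rightarrow\varphi$ and $\Gamma\Rightarrow\psi$ infer $\Gamma\Rightarrow\varphi\land\psi$; (∨L) from $\Gamma,\varphi\Rightarrow\chi$ and $\Gamma,\psi\Rightarrow\chi$ infer $\Gamma,\varphi\lor\psi\Rightarrow\chi$; (∨R$_i$), $i\in\{1,2\}$: from $\Gamma\Rightarrow\varphi_i$ infer $\Gamma\Rightarrow\varphi_1\lor\varphi_2$; (p→L) from $\Gamma,p,\varphi\Rightarrow\chi$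 infer $\Gamma,p,p\to\varphi\Rightarrow\chi$; (→R) from $\Gamma,\varphi\Rightarrow\psi$ infer $\Gamma\Rightarrow\varphi\to\psi$; (□→L) from $\Phi,\Gamma,\psi,\Box\varphi\Rightarrow\varphi$ and $\Phi,\Box\Gamma,\psi\Rightarrow\chi$ infer $\Phi,\Box\Gamma,\Box\varphi\to\psi\Rightarrow\chi$; (SLtR) from $\Phi,\Gamma,\Box\varphi\Rightarrow\varphi$ infer $\Phi,\Box\Gamma\Rightarrow\Box\varphi$; (∧→L) from $\Gamma,\varphi\to(\psi\to\chi)\Rightarrow\delta$ infer $\Gamma,(\varphi\land\psi)\to\chi\Rightarrow\delta$; (∨→L) from $\Gamma,\varphi\to\chi,\psi\to\chi\Rightarrow\delta$ infer $\Gamma,(\varphi\lor\psi)\to\chi\Rightarrow\delta$; (→→L) from $\Gamma,\psi\to\chi\Rightarrow\varphi\to\psi$ and $\Gamma,\chi\Rightarrow\delta$ infer $\Gamma,(\varphi\to\psi)\to\chi\Rightarrow\delta$. A proof of a sequent $S$ is a finite tree of sequents with root $S$ in which each interior node together with its children forms an instance of a rule (conclusion, premises) and each leaf is the conclusion of a premise-free rule; $S$ is provable if it has a proof. *)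

From Stdlib Require Import List Permutation.
Import ListNotations.

Inductive form : Type :=
| Var : nat -> form
| Bot : form
| And : form -> form -> form
| Or  : form -> form -> form
| Imp : form -> form -> form
| Box : form -> form.

Definition is_boxed (f : form) : Prop :=
  match f with Box _ => True | _ => False end.

Definition no_boxed (Phi : list form) : Prop := Forall (fun f => ~ is_boxed f) Phi.

(* Multisets are represented by lists; the context of each rule's conclusion
   is matched up to permutation, so provability depends only on the multiset. *)
Inductive G4iSLt : list form -> form -> Prop :=
| BotL (Gamma Gamma' : list form) (chi : form) :
    Permutation Gamma' (Bot :: Gamma) -> G4iSLt Gamma' chi
| IdP (Gamma Gamma' : list form) (p : nat) :
    Permutation Gamma' (Var p :: Gamma) -> G4iSLt Gamma' (Var p)
| AndL (Gamma Gamma' : list form) (phi psi chi : form) :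
    Permutation Gamma' (And phi psi :: Gamma) ->
    G4iSLt (phi :: psi :: Gamma) chi -> G4iSLt Gamma' chi
| AndR (Gamma : list form) (phi psi : form) :
    G4iSLt Gamma phi -> G4iSLt Gamma psi -> G4iSLt Gamma (And phi psi)
| OrL (Gamma Gamma' : list form) (phi psi chi : form) :
    Permutation Gamma' (Or phi psi :: Gamma) ->
    G4iSLt (phi :: Gamma) chi -> G4iSLt (psi :: Gamma) chi -> G4iSLt Gamma' chi
| OrR1 (Gamma : list form) (phi psi : form) :
    G4iSLt Gamma phi -> G4iSLt Gamma (Or phi psi)
| OrR2 (Gamma : list form) (phi psi : form) :
    G4iSLt Gamma psi -> G4iSLt Gamma (Or phi psi)
| PImpL (Gamma Gamma' : list form) (p : nat) (phi chi : form) :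
    Permutation Gamma' (Var p :: Imp (Var p) phi :: Gamma) ->
    G4iSLt (Var p :: phi :: Gamma) chi -> G4iSLt Gamma' chi
| ImpR (Gamma : list form) (phi psi : form) :
    G4iSLt (phi :: Gamma) psi -> G4iSLt Gamma (Imp phi psi)
| BoxImpL (Phi Gamma Gamma' : list form) (phi psi chi : form) :
    no_boxed Phi ->
    Permutation Gamma' (Imp (Box phi) psi :: Phi ++ map Box Gamma) ->
    G4iSLt (psi :: Box phi :: Phi ++ Gamma) phi ->
    G4iSLt (psi :: Phi ++ map Box Gamma) chi ->
    G4iSLt Gamma' chi
| SLtR (Phi Gamma Gamma' : list form) (phi : form) :
    no_boxed Phi ->
    Permutation Gamma' (Phi ++ map Box Gamma) ->
    G4iSLt (Box phi :: Phi ++ Gamma) phi ->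
    G4iSLt Gamma' (Box phi)
| AndImpL (Gamma Gamma' : list form) (phi psi chi delta : form) :
    Permutation Gamma' (Imp (And phi psi) chi :: Gamma) ->
    G4iSLt (Imp phi (Imp psi chi) :: Gamma) delta -> G4iSLt Gamma' delta
| OrImpL (Gamma Gamma' : list form) (phi psi chi delta : form) :
    Permutation Gamma' (Imp (Or phi psi) chi :: Gamma) ->
    G4iSLt (Imp phi chi :: Imp psi chi :: Gamma) delta -> G4iSLt Gamma' delta
| ImpImpL (Gamma Gamma' : list form) (phi psi chi delta : form) :
    Permutation Gamma' (Imp (Imp phi psi) chi :: Gamma) ->
    G4iSLt (Imp psi chi :: Gamma) (Imp phi psi) ->
    G4iSLt (chi :: Gamma) delta -> G4iSLt Gamma' delta.

From Stdlib Require Import List Permutation.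
From Stdlib Require Import Classical Lia Arith.
Import ListNotations.

(* The proof is semantic.  G4iSLt is sound and complete for finite tree models:
   trees whose nodes carry a list of true atoms and whose edges are either
   intuitionistic (flag false) or modal (flag true).  The intuitionistic order is
   reachability [reach]; the modal relation [modal_reach] consists of the paths
   that use at least one modal edge, so it is transitive, contained in [reach] and
   (trees being finite) conversely well founded, which validates the Löb principle
   used by SLtR and BoxImpL.
   - Soundness is an induction on derivations ([soundness]).
   - Completeness ([completeness]) builds a countermodel for every unprovable
     sequent by well-founded induction on a multiset measure [sequent_size]: if
     an invertible left rule applies to the context, a countermodel of its premise
     is one of the conclusion; otherwise the context is "irreducible" and a root
     labelled by its atoms is given children that refute the antecedents of its
     implications and the goal.
   Cut admissibility ([theorem2]) then follows: a countermodel of  Gamma => chi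
   forces phi by soundness of  Gamma => phi, hence forces chi by soundness of
   phi, Gamma => chi, a contradiction. *)

Inductive tree : Type := Node : list nat -> list (bool * tree) -> tree.

Definition label (t : tree) : list nat := let 'Node l _ := t in l.
Definition children (t : tree) : list (bool * tree) := let 'Node _ ks := t in ks.

Inductive persistent : tree -> Prop :=
| persistent_intro t :
    (forall b c, In (b, c) (children t) -> persistent c) ->
    (forall b c p, In (b, c) (children t) -> In p (label t) -> In p (label c)) ->
    persistent t.

Inductive reach : tree -> tree -> Prop :=
| reach_refl t : reach t t
| reach_step t b c u : In (b, c) (children t) -> reach c u -> reach t u.

Inductive modal_reach : tree -> tree -> Prop :=
| modal_edge t c u : In (true, c) (children t) -> reach c u -> modal_reach t u
| modal_deeper t b c u : In (b, c) (children t) -> modal_reach c u -> modal_reach t u.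

Fixpoint forces (t : tree) (A : form) : Prop :=
  match A with
  | Var p => In p (label t)
  | Bot => False
  | And a b => forces t a /\ forces t b
  | Or a b => forces t a \/ forces t b
  | Imp a b => forall u, reach t u -> forces u a -> forces u b
  | Box a => forall u, modal_reach t u -> forces u a
  end.

Lemma reach_trans t u v : reach t u -> reach u v -> reach t v.
Proof. induction 1; eauto using reach. Qed.

Lemma reach_modal_reach t u v : reach t u -> modal_reach u v -> modal_reach t v.
Proof. induction 1; eauto using modal_reach. Qed.

Lemma modal_reach_reach t u : modal_reach t u -> reach t u.
Proof. induction 1; eauto using reach. Qed.

Lemma modal_reach_trans t u v : modal_reach t u -> modal_reach u v -> modal_reach t v.
Proof. intros Htu; apply reach_modal_reach, modal_reach_reach, Htu. Qed.

Lemma persistent_reach t u : reach t u -> persistent t -> persistent u.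
Proof. induction 1 as [|t b c u Hc _ IH]; intros Ht; [exact Ht | destruct Ht; eauto]. Qed.

Lemma label_reach t u p : reach t u -> persistent t -> In p (label t) -> In p (label u).
Proof. induction 1 as [|t b c u Hc _ IH]; intros Ht Hp; [exact Hp | destruct Ht; eauto]. Qed.

Lemma forces_reach A t u : persistent t -> reach t u -> forces t A -> forces u A.
Proof.
  revert t u; induction A; simpl; intros t u Ht Htu H.
  - eapply label_reach; eauto.
  - exact H.
  - destruct H; split; eauto.
  - destruct H; [left | right]; eauto.
  - intros v Huv; apply H; eapply reach_trans; eauto.
  - intros v Huv; apply H; eapply reach_modal_reach; eauto.
Qed.

Lemma forces_imp_consequent t x y : persistent t -> forces t y -> forces t (Imp x y).
Proof. intros Ht Hy u Htu _; exact (forces_reach y t u Ht Htu Hy). Qed.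

Lemma Forall_forces_reach G t u :
  persistent t -> reach t u -> Forall (forces t) G -> Forall (forces u) G.
Proof. intros Ht Htu; apply Forall_impl; intros A; apply forces_reach; assumption. Qed.

Lemma modal_reach_wf t :
  persistent t -> forall u, reach t u -> Acc (fun x y => modal_reach y x) u.
Proof.
  induction 1 as [t Hk IHk _]; intros u Htu.
  destruct Htu as [t | t b c u Hc Hcu]; [| eapply IHk; eauto].
  constructor; intros v Htv.
  destruct Htv as [t c v Hc Hcv | t b c v Hc Hcv]; eapply IHk; eauto.
  apply modal_reach_reach; exact Hcv.
Qed.

(* The Löb principle: Box a holds at t if a holds at every modal successor that
   already forces Box a.  This is the semantic reading of SLtR. *)
Lemma loeb t a : persistent t ->
  (forall u, modal_reach t u -> forces u (Box a) -> forces u a) -> forces t (Box a).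
Proof.
  intros Ht Hstep u Htu.
  induction (modal_reach_wf t Ht u (modal_reach_reach _ _ Htu)) as [u _ IHu].
  apply Hstep; [exact Htu |].
  intros v Huv; apply IHu; [exact Huv |]; eapply modal_reach_trans; eauto.
Qed.

Lemma forces_modal_successor t u Phi G0 :
  persistent t -> modal_reach t u -> Forall (forces t) (Phi ++ map Box G0) ->
  Forall (forces u) (Phi ++ G0).
Proof.
  intros Ht Htu HG; apply Forall_app in HG as [HPhi HG0]; apply Forall_app; split.
  - eapply Forall_forces_reach; eauto using modal_reach_reach.
  - apply (Forall_map Box) in HG0; eapply Forall_impl; [| exact HG0].
    intros a Ha; exact (Ha u Htu).
Qed.

Theorem soundness G d :
  G4iSLt G d -> forall t, persistent t -> Forall (forces t) G -> forces t d.
Proof.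
  induction 1 as [G G' chi Hp | G G' p Hp | G G' a b chi Hp _ IH
    | G a b _ IH1 _ IH2 | G G' a b chi Hp _ IH1 _ IH2 | G a b _ IH | G a b _ IH
    | G G' p a chi Hp _ IH | G a b _ IH | Phi G G' a b chi Hnb Hp _ IH1 _ IH2
    | Phi G G' a Hnb Hp _ IH | G G' a b c e Hp _ IH | G G' a b c e Hp _ IH
    | G G' a b c e Hp _ IH1 _ IH2]; intros t Ht HG;
    try (rewrite Hp in HG; apply Forall_cons_iff in HG as [HA HG]).
  - destruct HA.
  - exact HA.
  - destruct HA; apply IH; auto.
  - split; auto.
  - destruct HA; [apply IH1 | apply IH2]; auto.
  - left; auto.
  - right; auto.
  - apply Forall_cons_iff in HG as [Himp HG].
    apply IH; auto. constructor; [exact HA |]. constructor; [| exact HG].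
    apply Himp; [constructor | exact HA].
  - intros u Htu Ha; apply IH; eauto using persistent_reach, Forall_forces_reach.
  - assert (Hbox : forces t (Box a)).
    { apply loeb; [exact Ht |]; intros u Htu Hu.
      apply IH1; [eapply persistent_reach; eauto using modal_reach_reach |].
      constructor; [apply HA; auto using modal_reach_reach |].
      constructor; [exact Hu |]; eapply forces_modal_successor; eauto. }
    apply IH2; auto. constructor; [apply HA; [constructor | exact Hbox] | exact HG].
  - rewrite Hp in HG; apply loeb; [exact Ht |]; intros u Htu Hu.
    apply IH; [eapply persistent_reach; eauto using modal_reach_reach |].
    constructor; [exact Hu |]; eapply forces_modal_successor; eauto.
  - apply IH; auto. constructor; [| exact HG].
    intros u Htu Ha v Huv Hb; apply HA; [eapply reach_trans; eauto |].
    split; [apply (forces_reach a u v); eauto using persistent_reach | exact Hb].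
  - apply IH; auto. repeat constructor; auto; intros u Htu Hu; apply HA; auto.
  - assert (Hbc : forces t (Imp b c)).
    { intros u Htu Hb; apply HA; [exact Htu |].
      apply forces_imp_consequent; [eapply persistent_reach |]; eauto. }
    apply IH2; auto. constructor; [| exact HG].
    apply HA; [constructor |]. apply IH1; auto.
Qed.

(* The weight of a formula; [sequent_size] is the multiset measure  sum of 4^weight
   over the context plus 4^(weight goal + 1), which decreases from the conclusion
   to every premise used in the countermodel construction. *)
Fixpoint weight (A : form) : nat :=
  match A with
  | Var _ | Bot => 1
  | And a b => weight a + weight b + 2
  | Or a b | Imp a b => weight a + weight b + 1
  | Box a => weight a + 1
  end.

Fixpoint context_size (G : list form) : nat :=
  match G with
  | [] => 0
  | A :: G => 4 ^ weight A + context_size G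
  end.

Definition sequent_size (G : list form) (d : form) : nat :=
  context_size G + 4 ^ (weight d + 1).

Lemma context_size_app G H : context_size (G ++ H) = context_size G + context_size H.
Proof. induction G; simpl; lia. Qed.

Lemma context_size_map_Box G : context_size (map Box G) = 4 * context_size G.
Proof. induction G; simpl; [reflexivity |]. rewrite IHG, Nat.pow_add_r, Nat.pow_1_r; lia. Qed.

Lemma sequent_size_perm G G' d :
  Permutation G G' -> sequent_size G d = sequent_size G' d.
Proof. unfold sequent_size; induction 1; simpl; lia. Qed.

Lemma pow4_step e f : e < f -> 4 ^ e * 4 <= 4 ^ f.
Proof.
  intros H; rewrite Nat.mul_comm, <- Nat.pow_succ_r'.
  apply Nat.pow_le_mono_r; lia.
Qed.

Lemma pow4_pos e : 1 <= 4 ^ e.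
Proof. induction e; simpl; lia. Qed.

(* Decides comparisons between sequent sizes: it records, for every pair of
   exponents occurring in the goal, the inequality 4^e * 4 <= 4^f when e < f,
   and then calls lia. *)
Ltac size_lia :=
  unfold sequent_size; cbn [context_size weight];
  rewrite ?context_size_app, ?context_size_map_Box; cbn [context_size weight];
  repeat match goal with
  | |- context [4 ^ ?e1] => match goal with
    | |- context [4 ^ ?e2] => lazymatch goal with
      | _ : 4 ^ e1 * 4 <= 4 ^ e2 |- _ => fail
      | _ => assert (4 ^ e1 * 4 <= 4 ^ e2) by (apply pow4_step; lia)
      end
    end
  end;
  repeat match goal with
  | |- context [4 ^ ?e] => lazymatch goal with
    | _ : 1 <= 4 ^ e |- _ => fail
    | _ => pose proof (pow4_pos e)
    end
  end;
  lia.

Definition countermodel (G : list form) (d : form) : Prop :=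
  exists t, persistent t /\ Forall (forces t) G /\ ~ forces t d.

Lemma Forall_forces_perm t G A rest :
  Permutation G (A :: rest) -> forces t A -> Forall (forces t) rest -> Forall (forces t) G.
Proof. intros Hp HA Hrest; rewrite Hp; constructor; assumption. Qed.

Definition atoms (G : list form) : list nat :=
  flat_map (fun A => match A with Var p => [p] | _ => [] end) G.

Lemma in_atoms G p : In p (atoms G) <-> In (Var p) G.
Proof.
  unfold atoms; rewrite in_flat_map; split.
  - intros [[q | | | | |] [HA Hp]]; simpl in Hp; try contradiction.
    destruct Hp as [-> | []]; exact HA.
  - intros H; exists (Var p); simpl; auto.
Qed.

Lemma box_free_decomposition L :
  exists Phi G0, no_boxed Phi /\ Permutation L (Phi ++ map Box G0).
Proof.
  induction L as [| A L (Phi & G0 & Hnb & Hp)].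
  - exists [], []; split; constructor.
  - destruct A as [p | | a b | a b | a b | a];
      [ exists (Var p :: Phi), G0 | exists (Bot :: Phi), G0
      | exists (And a b :: Phi), G0 | exists (Or a b :: Phi), G0
      | exists (Imp a b :: Phi), G0 | exists Phi, (a :: G0) ];
      split; simpl; try (constructor; [intros [] | assumption]); auto.
    rewrite Hp; apply Permutation_middle.
Qed.

Lemma boxes_in_decomposition Phi G0 a :
  no_boxed Phi -> In (Box a) (Phi ++ map Box G0) -> In a G0.
Proof.
  intros Hnb H; apply in_app_or in H as [H | H].
  - exfalso; exact (proj1 (Forall_forall _ _) Hnb _ H I).
  - apply in_map_iff in H as (x & Hx & Hin); injection Hx as ->; exact Hin.
Qed.

Definition good_child (G : list form) (k : bool * tree) : Prop :=
  persistent (snd k) /\ Forall (forces (snd k)) G /\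
  (fst k = true -> forall a, In (Box a) G -> forces (snd k) a).

Lemma modal_child_good G Phi G0 m :
  no_boxed Phi -> Permutation G (Phi ++ map Box G0) ->
  persistent m -> Forall (forces m) (Phi ++ G0) -> good_child G (true, m).
Proof.
  intros Hnb Hp Hm Hf; apply Forall_app in Hf as [HPhi HG0].
  split; [exact Hm | split].
  - rewrite Hp; apply Forall_app; split; [exact HPhi |].
    apply Forall_map; eapply Forall_impl; [| exact HG0].
    intros a Ha u Hmu; eapply forces_reach; eauto using modal_reach_reach.
  - intros _ a Ha; eapply Forall_forall; [exact HG0 |].
    eapply boxes_in_decomposition; [exact Hnb |]; rewrite <- Hp; exact Ha.
Qed.

Lemma child_refutes_imp t b m x y :
  In (b, m) (children t) -> forces m x -> ~ forces m y -> ~ forces t (Imp x y).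
Proof.
  intros Hin Hx Hy H; apply Hy, H; [econstructor; [exact Hin | constructor] | exact Hx].
Qed.

Lemma modal_child_refutes_box t m a :
  In (true, m) (children t) -> ~ forces m a -> ~ forces t (Box a).
Proof. intros Hin Ha H; apply Ha, H; econstructor; [exact Hin | constructor]. Qed.

Definition root (G : list form) (ks : list (bool * tree)) : tree := Node (atoms G) ks.

Section Root.
Variables (G : list form) (ks : list (bool * tree)).
Hypothesis ks_good : Forall (good_child G) ks.

Lemma root_child_good k : In k ks -> good_child G k.
Proof. exact (proj1 (Forall_forall _ _) ks_good k). Qed.

(* Persistence holds at the root because each child forces the atoms of G. *)
Lemma root_persistent : persistent (root G ks).
Proof.
  constructor; simpl; intros b c.
  - intros Hin; exact (proj1 (root_child_good _ Hin)).
  - intros p Hin Hp; apply in_atoms in Hp.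
    destruct (root_child_good _ Hin) as (_ & HG & _).
    exact (proj1 (Forall_forall _ _) HG _ Hp).
Qed.

(* An implication of G holds at the root as soon as it holds locally there, since
   every strictly later node lies below a child forcing G. *)
Lemma root_forces_imp x y :
  In (Imp x y) G -> (forces (root G ks) x -> forces (root G ks) y) ->
  forces (root G ks) (Imp x y).
Proof.
  intros HG Hroot u Hu; inversion Hu as [| t b c v Hin Hcu]; subst; [exact Hroot |].
  destruct (root_child_good _ Hin) as (_ & Hf & _).
  exact (proj1 (Forall_forall _ _) Hf _ HG u Hcu).
Qed.

Lemma root_forces_box a : In (Box a) G -> forces (root G ks) (Box a).
Proof.
  intros HG u Hu; inversion Hu as [t c v Hin Hcu | t b c v Hin Hcu]; subst;
    destruct (root_child_good _ Hin) as (Hc & Hf & Hbox).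
  - eapply forces_reach; [exact Hc | exact Hcu |]; exact (Hbox eq_refl a HG).
  - exact (proj1 (Forall_forall _ _) Hf _ HG u Hcu).
Qed.

End Root.

Lemma finite_choice {X Y : Type} (P : Y -> Prop) (Q : X -> Y -> Prop) (L : list X) :
  exists ks, Forall P ks /\
    forall A, In A L -> (exists k, P k /\ Q A k) -> exists k, In k ks /\ Q A k.
Proof.
  induction L as [| A L (ks & Hks & Hwit)].
  - exists []; split; [constructor | intros A []].
  - destruct (classic (exists k, P k /\ Q A k)) as [(k & Hk & HQ) | Hnone].
    + exists (k :: ks); split; [constructor; assumption |].
      intros A' [<- | HA'] Hex; [exists k; simpl; auto |].
      destruct (Hwit A' HA' Hex) as (k' & Hin & HQ'); exists k'; simpl; auto.
    + exists ks; split; [exact Hks |].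
      intros A' [<- | HA'] Hex; [contradiction | auto].
Qed.

(* A formula of G is irreducible if no invertible left rule applies to it and the
   left premise of the non-invertible rules ImpImpL and BoxImpL is unprovable. *)
Definition irreducible (G : list form) (A : form) : Prop :=
  match A with
  | Var _ | Box _ | Imp Bot _ => True
  | Bot | And _ _ | Or _ _ | Imp (And _ _) _ | Imp (Or _ _) _ => False
  | Imp (Var p) _ => ~ In (Var p) G
  | Imp (Imp a1 a2) b =>
      exists rest, Permutation G (Imp (Imp a1 a2) b :: rest) /\
        ~ G4iSLt (a1 :: Imp a2 b :: rest) a2
  | Imp (Box a1) b =>
      exists Phi G0, no_boxed Phi /\ Permutation G (Imp (Box a1) b :: Phi ++ map Box G0) /\
        ~ G4iSLt (b :: Box a1 :: Phi ++ G0) a1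
  end.

Definition refutes_antecedent (A : form) (k : bool * tree) : Prop :=
  match A with
  | Imp (Imp a1 a2) _ => forces (snd k) a1 /\ ~ forces (snd k) a2
  | Imp (Box a1) _ => fst k = true /\ ~ forces (snd k) a1
  | _ => True
  end.

Section Countermodel_step.
Variables (G : list form) (d : form).
Hypothesis IH : forall G' d',
  sequent_size G' d' < sequent_size G d -> ~ G4iSLt G' d' -> countermodel G' d'.
Hypothesis unprovable : ~ G4iSLt G d.

Lemma countermodel_from_premise P :
  (G4iSLt P d -> G4iSLt G d) -> sequent_size P d < sequent_size G d ->
  (forall t, persistent t -> Forall (forces t) P -> Forall (forces t) G) ->
  countermodel G d.
Proof.
  intros Hrule Hsize Hforces.
  destruct (IH P d Hsize (fun D => unprovable (Hrule D))) as (t & Ht & HP & Hd).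
  exists t; auto.
Qed.

Lemma atom_imp_countermodel p b rest :
  Permutation G (Imp (Var p) b :: rest) -> In (Var p) G -> countermodel G d.
Proof.
  intros Hp Hv; rewrite Hp in Hv; destruct Hv as [Hv | Hv]; [discriminate |].
  apply in_split in Hv as (l1 & l2 & ->).
  assert (Hp' : Permutation G (Var p :: Imp (Var p) b :: l1 ++ l2)).
  { rewrite Hp, <- Permutation_middle; apply perm_swap. }
  apply (countermodel_from_premise (Var p :: b :: l1 ++ l2)).
  - intro D; eapply PImpL; eauto.
  - rewrite (sequent_size_perm _ _ d Hp'); size_lia.
  - intros t Ht HP; apply Forall_cons_iff in HP as [Hv HP].
    apply Forall_cons_iff in HP as [Hb HP].
    rewrite Hp'; constructor; [exact Hv |]; constructor; [| exact HP].
    apply forces_imp_consequent; assumption.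
Qed.

Lemma reducible_imp_countermodel a b rest :
  Permutation G (Imp a b :: rest) -> ~ irreducible G (Imp a b) -> countermodel G d.
Proof.
  intros Hp Hred; destruct a as [p | | a1 a2 | a1 a2 | a1 a2 | a1]; simpl in Hred.
  - apply NNPP in Hred; eapply atom_imp_countermodel; eauto.
  - contradiction.
  - apply (countermodel_from_premise (Imp a1 (Imp a2 b) :: rest)).
    + intro D; eapply AndImpL; eauto.
    + rewrite (sequent_size_perm _ _ d Hp); size_lia.
    + intros t Ht HP; apply Forall_cons_iff in HP as [Hi HP].
      apply (Forall_forces_perm _ _ _ _ Hp); [| exact HP].
      intros u Hu [H1 H2]; exact (Hi u Hu H1 u (reach_refl u) H2).
  - apply (countermodel_from_premise (Imp a1 b :: Imp a2 b :: rest)).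
    + intro D; eapply OrImpL; eauto.
    + rewrite (sequent_size_perm _ _ d Hp); size_lia.
    + intros t Ht HP; apply Forall_cons_iff in HP as [Hi1 HP].
      apply Forall_cons_iff in HP as [Hi2 HP].
      apply (Forall_forces_perm _ _ _ _ Hp); [| exact HP].
      intros u Hu [H1 | H2]; [apply Hi1 | apply Hi2]; auto.
  - assert (D1 : G4iSLt (a1 :: Imp a2 b :: rest) a2).
    { apply NNPP; intro N; apply Hred; exists rest; auto. }
    apply (countermodel_from_premise (b :: rest)).
    + intro D; eapply ImpImpL; [exact Hp | apply ImpR, D1 | exact D].
    + rewrite (sequent_size_perm _ _ d Hp); size_lia.
    + intros t Ht HP; apply Forall_cons_iff in HP as [Hb HP].
      apply (Forall_forces_perm _ _ _ _ Hp); [| exact HP].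
      apply forces_imp_consequent; assumption.
  - destruct (box_free_decomposition rest) as (Phi & G0 & Hnb & Hrest).
    rewrite Hrest in Hp.
    assert (D1 : G4iSLt (b :: Box a1 :: Phi ++ G0) a1).
    { apply NNPP; intro N; apply Hred; exists Phi, G0; auto. }
    apply (countermodel_from_premise (b :: Phi ++ map Box G0)).
    + intro D; eapply BoxImpL; eauto.
    + rewrite (sequent_size_perm _ _ d Hp); size_lia.
    + intros t Ht HP; apply Forall_cons_iff in HP as [Hb HP].
      apply (Forall_forces_perm _ _ _ _ Hp); [| exact HP].
      apply forces_imp_consequent; assumption.
Qed.

Lemma reducible_countermodel A rest :
  Permutation G (A :: rest) -> ~ irreducible G A -> countermodel G d.
Proof.
  intros Hp Hred; destruct A as [p | | a b | a b | a b | a]; simpl in Hred.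
  - contradiction.
  - exfalso; apply unprovable; eapply BotL; exact Hp.
  - apply (countermodel_from_premise (a :: b :: rest)).
    + intro D; eapply AndL; eauto.
    + rewrite (sequent_size_perm _ _ d Hp); size_lia.
    + intros t Ht HP; apply Forall_cons_iff in HP as [Ha HP].
      apply Forall_cons_iff in HP as [Hb HP].
      apply (Forall_forces_perm _ _ _ _ Hp); [split |]; assumption.
  -
    destruct (classic (G4iSLt (a :: rest) d)) as [Da | Na].
    + apply (countermodel_from_premise (b :: rest)).
      * intro Db; eapply OrL; eauto.
      * rewrite (sequent_size_perm _ _ d Hp); size_lia.
      * intros t Ht HP; apply Forall_cons_iff in HP as [Hb HP].
        apply (Forall_forces_perm _ _ _ _ Hp); [right |]; assumption.
    + apply (countermodel_from_premise (a :: rest)).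
      * intro Da; contradiction.
      * rewrite (sequent_size_perm _ _ d Hp); size_lia.
      * intros t Ht HP; apply Forall_cons_iff in HP as [Ha HP].
        apply (Forall_forces_perm _ _ _ _ Hp); [left |]; assumption.
  - eapply reducible_imp_countermodel; eauto.
  - contradiction.
Qed.

Lemma imp_imp_witness a1 a2 b rest :
  Permutation G (Imp (Imp a1 a2) b :: rest) -> ~ G4iSLt (a1 :: Imp a2 b :: rest) a2 ->
  exists k, good_child G k /\ refutes_antecedent (Imp (Imp a1 a2) b) k.
Proof.
  intros Hp N.
  destruct (IH (a1 :: Imp a2 b :: rest) a2
    ltac:(rewrite (sequent_size_perm _ _ d Hp); size_lia) N) as (m & Hm & Hf & Ha2).
  apply Forall_cons_iff in Hf as [Ha1 Hf]; apply Forall_cons_iff in Hf as [Himp Hf].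
  exists (false, m); split; [split; [exact Hm | split; [| discriminate]] | split; assumption].
  apply (Forall_forces_perm _ _ _ _ Hp); [| exact Hf].
  intros u Hmu Hu; apply (Himp u Hmu), Hu; [constructor |].
  apply (forces_reach a1 m u); auto.
Qed.

Lemma box_imp_witness a1 b Phi G0 :
  no_boxed Phi -> Permutation G (Imp (Box a1) b :: Phi ++ map Box G0) ->
  ~ G4iSLt (b :: Box a1 :: Phi ++ G0) a1 ->
  exists k, good_child G k /\ refutes_antecedent (Imp (Box a1) b) k.
Proof.
  intros Hnb Hp N.
  destruct (IH (b :: Box a1 :: Phi ++ G0) a1
    ltac:(rewrite (sequent_size_perm _ _ d Hp); size_lia) N) as (m & Hm & Hf & Ha1).
  apply Forall_cons_iff in Hf as [Hb Hf]; apply Forall_cons_iff in Hf as [_ Hf].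
  exists (true, m); split; [| split; auto].
  apply (modal_child_good G (Imp (Box a1) b :: Phi) G0); auto.
  - constructor; [intros [] | exact Hnb].
  - constructor; [apply forces_imp_consequent; assumption | exact Hf].
Qed.

Lemma imp_goal_refuter B1 B2 :
  sequent_size G (Imp B1 B2) <= sequent_size G d -> ~ G4iSLt G (Imp B1 B2) ->
  exists k, good_child G k /\ forall ks, In k ks -> ~ forces (root G ks) (Imp B1 B2).
Proof.
  intros Hsize N.
  assert (N' : ~ G4iSLt (B1 :: G) B2) by (intro D; apply N, ImpR, D).
  destruct (IH (B1 :: G) B2 ltac:(eapply Nat.lt_le_trans; [| exact Hsize]; size_lia) N')
    as (m & Hm & Hf & HB2).
  apply Forall_cons_iff in Hf as [HB1 Hf].
  exists (false, m); split; [split; [exact Hm | split; [exact Hf | discriminate]] |].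
  intros ks Hin; exact (child_refutes_imp (root G ks) false m B1 B2 Hin HB1 HB2).
Qed.

Lemma box_goal_refuter B1 :
  sequent_size G (Box B1) <= sequent_size G d -> ~ G4iSLt G (Box B1) ->
  exists k, good_child G k /\ forall ks, In k ks -> ~ forces (root G ks) (Box B1).
Proof.
  intros Hsize N.
  destruct (box_free_decomposition G) as (Phi & G0 & Hnb & Hp).
  assert (N' : ~ G4iSLt (Box B1 :: Phi ++ G0) B1) by (intro D; apply N; eapply SLtR; eauto).
  destruct (IH (Box B1 :: Phi ++ G0) B1
    ltac:(eapply Nat.lt_le_trans; [| exact Hsize];
          rewrite (sequent_size_perm _ _ (Box B1) Hp); size_lia) N')
    as (m & Hm & Hf & HB1).
  apply Forall_cons_iff in Hf as [_ Hf].
  exists (true, m); split; [eapply modal_child_good; eauto |].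
  intros ks Hin; exact (modal_child_refutes_box (root G ks) m B1 Hin HB1).
Qed.

Lemma goal_refuters B :
  sequent_size G B <= sequent_size G d -> ~ G4iSLt G B ->
  exists ks, Forall (good_child G) ks /\
    forall ks', incl ks ks' -> ~ forces (root G ks') B.
Proof.
  induction B as [p | | B1 IH1 B2 IH2 | B1 IH1 B2 IH2 | B1 _ B2 _ | B1 _]; intros Hsize N.
  - exists []; split; [constructor |]; intros ks' _ Hp.
    apply N; simpl in Hp; apply in_atoms in Hp.
    destruct (in_split _ _ Hp) as (l1 & l2 & ->).
    apply (IdP (l1 ++ l2)); symmetry; apply Permutation_middle.
  - exists []; split; [constructor | intros ks' _ []].
  - assert (Hsize1 : sequent_size G B1 <= sequent_size G d)
      by (eapply Nat.le_trans; [| exact Hsize]; size_lia).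
    assert (Hsize2 : sequent_size G B2 <= sequent_size G d)
      by (eapply Nat.le_trans; [| exact Hsize]; size_lia).
    destruct (classic (G4iSLt G B1)) as [D1 | N1].
    + assert (N2 : ~ G4iSLt G B2) by (intro D2; apply N, AndR; assumption).
      destruct (IH2 Hsize2 N2) as (ks & Hks & Href).
      exists ks; split; [exact Hks |]; intros ks' Hincl [_ H2]; exact (Href ks' Hincl H2).
    + destruct (IH1 Hsize1 N1) as (ks & Hks & Href).
      exists ks; split; [exact Hks |]; intros ks' Hincl [H1 _]; exact (Href ks' Hincl H1).
  - assert (Hsize1 : sequent_size G B1 <= sequent_size G d)
      by (eapply Nat.le_trans; [| exact Hsize]; size_lia).
    assert (Hsize2 : sequent_size G B2 <= sequent_size G d)
      by (eapply Nat.le_trans; [| exact Hsize]; size_lia).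
    destruct (IH1 Hsize1 (fun D => N (OrR1 _ _ _ D))) as (ks1 & Hks1 & Href1).
    destruct (IH2 Hsize2 (fun D => N (OrR2 _ _ _ D))) as (ks2 & Hks2 & Href2).
    exists (ks1 ++ ks2); split; [apply Forall_app; auto |].
    intros ks' Hincl [H1 | H2]; [eapply Href1 | eapply Href2]; eauto;
      intros k Hk; apply Hincl, in_or_app; auto.
  - destruct (imp_goal_refuter B1 B2 Hsize N) as (k & Hk & Href).
    exists [k]; split; [constructor; [exact Hk | constructor] |].
    intros ks' Hincl; apply Href, Hincl; left; reflexivity.
  - destruct (box_goal_refuter B1 Hsize N) as (k & Hk & Href).
    exists [k]; split; [constructor; [exact Hk | constructor] |].
    intros ks' Hincl; apply Href, Hincl; left; reflexivity.
Qed.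

Lemma root_forces_irreducible ks :
  Forall (good_child G) ks ->
  (forall A, In A G -> (exists k, good_child G k /\ refutes_antecedent A k) ->
     exists k, In k ks /\ refutes_antecedent A k) ->
  forall A, In A G -> irreducible G A -> forces (root G ks) A.
Proof.
  intros Hks Hwit A HA Hirr.
  destruct A as [p | | a b | a b | a b | a]; simpl in Hirr; try contradiction.
  - apply in_atoms, HA.
  - apply root_forces_imp; [exact Hks | exact HA |].
    destruct a as [p | | a1 a2 | a1 a2 | a1 a2 | a1]; simpl in Hirr; try contradiction.
    + intros Hp; apply in_atoms in Hp; contradiction.
    + destruct Hirr as (rest & Hp & N).
      destruct (Hwit _ HA (imp_imp_witness a1 a2 b rest Hp N))
        as ((flag, m) & Hin & Ha1 & Ha2).
      intros Hroot; exfalso.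
      exact (child_refutes_imp (root G ks) flag m a1 a2 Hin Ha1 Ha2 Hroot).
    + destruct Hirr as (Phi & G0 & Hnb & Hp & N).
      destruct (Hwit _ HA (box_imp_witness a1 b Phi G0 Hnb Hp N))
        as ((flag, m) & Hin & Hflag & Ha1); simpl in Hflag; subst flag.
      intros Hroot; exfalso.
      exact (modal_child_refutes_box (root G ks) m a1 Hin Ha1 Hroot).
  - apply root_forces_box; assumption.
Qed.

Lemma irreducible_countermodel :
  (forall A, In A G -> irreducible G A) -> countermodel G d.
Proof.
  intros Hirr.
  destruct (finite_choice (good_child G) refutes_antecedent G) as (ks1 & Hks1 & Hwit).
  destruct (goal_refuters d (Nat.le_refl _) unprovable) as (ks2 & Hks2 & Href).
  assert (Hks : Forall (good_child G) (ks1 ++ ks2)) by (apply Forall_app; auto).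
  exists (root G (ks1 ++ ks2)); split; [apply root_persistent, Hks | split].
  - apply Forall_forall; intros A HA; apply root_forces_irreducible; auto.
    intros A' HA' Hex; destruct (Hwit A' HA' Hex) as (k & Hk & HQ).
    exists k; split; [apply in_or_app; left |]; assumption.
  - apply Href; intros k Hk; apply in_or_app; right; exact Hk.
Qed.

End Countermodel_step.

Theorem completeness G d : ~ G4iSLt G d -> countermodel G d.
Proof.
  remember (sequent_size G d) as n eqn:Hn; revert G d Hn.
  induction n as [n IHn] using lt_wf_ind; intros G d Hn N; subst n.
  assert (IH : forall G' d', sequent_size G' d' < sequent_size G d ->
                 ~ G4iSLt G' d' -> countermodel G' d')
    by (intros G' d' Hlt; eapply IHn; eauto).
  destruct (classic (forall A, In A G -> irreducible G A)) as [Hirr | Hred].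
  - apply irreducible_countermodel; assumption.
  - apply not_all_ex_not in Hred as [A HA]; apply imply_to_and in HA as [HA Hred].
    destruct (in_split _ _ HA) as (l1 & l2 & HG).
    apply (reducible_countermodel G d IH N A (l1 ++ l2)); [| exact Hred].
    rewrite HG; symmetry; apply Permutation_middle.
Qed.

Theorem theorem2 (Gamma : list form) (phi chi : form) :
  G4iSLt Gamma phi -> G4iSLt (phi :: Gamma) chi -> G4iSLt Gamma chi.
Proof.
  intros Dphi Dchi; apply NNPP; intros Nchi.
  destruct (completeness _ _ Nchi) as (t & Ht & HGamma & Hchi).
  apply Hchi, (soundness _ _ Dchi t Ht).
  constructor; [exact (soundness _ _ Dphi t Ht HGamma) | exact HGamma].
Qed.
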